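(* For every $t\ge1$, $$\|\Psi_{t,1}\|\le\sqrt{\frac{\|W+LVL^\top\|\kappa_F^2}{\lambda_{\min}(W)(1-\gamma_F^2)}},\qquad \|\Sigma_t-\Sigma\|\le\kappa_F^2\gamma_F^{t-1}\|W-\Sigma\|\sqrt{\frac{\|W+LVL^\top\|}{\lambda_{\min}(W)(1-\gamma_F^2)}},$$ $$\|L_t-L\|\le\frac{\kappa_F^3\gamma_F^{t}\|W-\Sigma\|\|C\|}{\lambda_{\min}(V)}\sqrt{\frac{\|W+LVL^\top\|}{\lambda_{\min}(W)(1-\gamma_F^2)}}.$$
   Context: Standing setup. Consider the discrete-time LTI system $x_{t+1}=Ax_t+w_t$, $y_t=Cx_t+v_t$ ($t\ge0$) with $x_t\in\mathbb R^n$, $y_t\in\mathbb R^p$, $x_0=0$, $w_t\overset{iid}{\sim}\mathcal N(0,W)$, $v_t\overset{iid}{\sim}\mathcal N(0,V)$, the two noise sequences independent. Assume $(A,W^{1/2})$ is stabilizable and $(A,C)$ is detectable. Let $\Sigma\succeq0$ be the unique positive semidefinite solution of $\Sigma=A\Sigma A^\top-A\Sigma C^\top(C\Sigma C^\top+V)^{-1}C\Sigma A^\top+W$ and $L=A\Sigma C^\top(C\Sigma C^\top+V)^{-1}$. Known constants $\alpha_0,\alpha_1,\psi,\bar\sigma>0$ satisfy $\alpha_0I_n\preceq W\preceq\alpha_1I_n$, $\alpha_0I_p\preceq V\preceq\alpha_1I_p$, $\|C\|\le\psi$, $\|\Sigma\|\le\bar\sigma$. Set $\kappa_F=\sqrt{\bar\sigma/\alpha_0}$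 and $\gamma_F=1-\frac{\alpha_0}{2\bar\sigma}$. $\|\cdot\|$ is the Euclidean/spectral norm and $\|\cdot\|_F$ the Frobenius norm. Finite-horizon Kalman recursion: $\Sigma_0=0$, $\Sigma_{t+1}=A\Sigma_tA^\top-A\Sigma_tC^\top(C\Sigma_tC^\top+V)^{-1}C\Sigma_tA^\top+W$, and $L_t=A\Sigma_tC^\top(C\Sigma_tC^\top+V)^{-1}$. For integers $k>l\ge0$, $\Psi_{k,l}=(A-L_{k-1}C)(A-L_{k-2}C)\cdots(A-L_lC)$, and $\Psi_{k,l}=I_n$ if $k\le l$. $\lambda_{\min}$ denotes the smallest eigenvalue. *)

From HB Require Import structures.
From mathcomp Require Import all_boot all_order all_algebra.
From mathcomp Require Import classical_sets reals.
From mathcomp Require Import complex.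
Set Implicit Arguments. Unset Strict Implicit. Unset Printing Implicit Defensive.
Import Order.TTheory GRing.Theory Num.Theory.
Local Open Scope ring_scope.

Section KalmanDefs.
Variable R : realType.

Definition vnorm (m : nat) (x : 'cV[R]_m) : R := Num.sqrt (\sum_i (x i 0) ^+ 2).

Definition opnorm (m k : nat) (M : 'M[R]_(m, k)) : R :=
  reals.sup [set vnorm (M *m x) | x in [set x : 'cV[R]_k | vnorm x <= 1]]%classic.

Definition lambda_min (m : nat) (M : 'M[R]_m) : R :=
  reals.inf [set a : R | eigenvalue M a]%classic.

Definition psd (m : nat) (M : 'M[R]_m) : Prop :=
  M^T = M /\ forall x : 'cV[R]_m, 0 <= (x^T *m M *m x) 0 0.
Definition loewner_le (m : nat) (M N : 'M[R]_m) : Prop := psd (N - M).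

Definition schur_stable (m : nat) (M : 'M[R]_m) : Prop :=
  forall z : R[i], eigenvalue (map_mx (fun x : R => (x%:C)%C) M) z -> `|z| < 1.

Definition stabilizable (m k : nat) (A : 'M[R]_m) (B : 'M[R]_(m, k)) : Prop :=
  exists K : 'M[R]_(k, m), schur_stable (A + B *m K).
Definition detectable (m k : nat) (A : 'M[R]_m) (C : 'M[R]_(k, m)) : Prop :=
  exists L : 'M[R]_(m, k), schur_stable (A - L *m C).

Definition riccati (n p : nat) (A : 'M[R]_n) (C : 'M[R]_(p, n)) (W : 'M[R]_n)
  (V : 'M[R]_p) (S : 'M[R]_n) : 'M[R]_n :=
  A *m S *m A^T - A *m S *m C^T *m invmx (C *m S *m C^T + V) *m C *m S *m A^T + W.

Definition kgain (n p : nat) (A : 'M[R]_n) (C : 'M[R]_(p, n)) (V : 'M[R]_p)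
  (S : 'M[R]_n) : 'M[R]_(n, p) :=
  A *m S *m C^T *m invmx (C *m S *m C^T + V).

Fixpoint Sig (n p : nat) (A : 'M[R]_n) (C : 'M[R]_(p, n)) (W : 'M[R]_n)
  (V : 'M[R]_p) (t : nat) : 'M[R]_n :=
  match t with
  | 0 => 0
  | t'.+1 => riccati A C W V (Sig A C W V t')
  end.

Definition Lt (n p : nat) (A : 'M[R]_n) (C : 'M[R]_(p, n)) (W : 'M[R]_n)
  (V : 'M[R]_p) (t : nat) : 'M[R]_(n, p) := kgain A C V (Sig A C W V t).

(* Psi_{k,l} = (A - L_{k-1} C) ... (A - L_l C), identity if k <= l *)
Fixpoint Psi (n p : nat) (A : 'M[R]_n) (C : 'M[R]_(p, n)) (W : 'M[R]_n)
  (V : 'M[R]_p) (k l : nat) : 'M[R]_n :=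
  match k with
  | 0 => 1%:M
  | k'.+1 => if (k'.+1 <= l)%N then 1%:M
             else (A - Lt A C W V k' *m C) *m Psi A C W V k' l
  end.

End KalmanDefs.

From HB Require Import structures.
From mathcomp Require Import all_boot all_order all_algebra.
From mathcomp Require Import classical_sets reals.
From mathcomp Require Import ring lra.
Import Order.TTheory GRing.Theory Num.Theory.
Local Open Scope ring_scope.
Set Implicit Arguments. Unset Strict Implicit. Unset Printing Implicit Defensive.

(* Write F = A - L C.  The fixed-point equation reads
   Sigma = F Sigma F^T + W + L V L^T >= F Sigma F^T + alpha0 I,
   and alpha0 I >= (alpha0 / sigbar) Sigma, so F Sigma F^T <= gammaF^2 Sigma; since
   alpha0 I <= Sigma <= sigbar I this gives |F^k| <= kappaF gammaF^k.  The Riccati map is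
   the Joseph form (A - K C) S (A - K C)^T + W + K V K^T minimised over the gain K, which
   yields Sigma_t <= Sigma and Psi_{t,1} W Psi_{t,1}^T <= Sigma_t, hence
   |Psi_{t,1}| <= kappaF.  Finally Sigma_t - Sigma = Psi_{t,1} (W - Sigma) (F^{t-1})^T and
   L_t - L = F (Sigma_t - Sigma) C^T (C Sigma_t C^T + V)^-1, while the square root in the
   statement is at least 1 because lambda_min(W) (1 - gammaF^2) <= |W + L V L^T|. *)

Section BilinearForms.
Variable R : realType.

Definition bform a b (B : 'M[R]_(a, b)) (x : 'cV[R]_a) (y : 'cV[R]_b) : R :=
  (x^T *m B *m y) 0 0.

Definition dot m (x y : 'cV[R]_m) : R := bform 1%:M x y.

Lemma bformDl a b (B : 'M[R]_(a, b)) x y z : bform B (x + y) z = bform B x z + bform B y z.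
Proof. by rewrite /bform linearD /= !mulmxDl mxE. Qed.

Lemma bformDr a b (B : 'M[R]_(a, b)) x y z : bform B x (y + z) = bform B x y + bform B x z.
Proof. by rewrite /bform mulmxDr mxE. Qed.

Lemma bformZl a b (B : 'M[R]_(a, b)) c x y : bform B (c *: x) y = c * bform B x y.
Proof. by rewrite /bform linearZ /= -!scalemxAl mxE. Qed.

Lemma bformZr a b (B : 'M[R]_(a, b)) c x y : bform B x (c *: y) = c * bform B x y.
Proof. by rewrite /bform -scalemxAr mxE. Qed.

Lemma bform0l a b (B : 'M[R]_(a, b)) y : bform B 0 y = 0.
Proof. by rewrite /bform trmx0 !mul0mx mxE. Qed.

Lemma bform0 a b (x : 'cV[R]_a) (y : 'cV[R]_b) : bform 0 x y = 0.
Proof. by rewrite /bform mulmx0 mul0mx mxE. Qed.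

Lemma bform_add a b (B B' : 'M[R]_(a, b)) x y :
  bform (B + B') x y = bform B x y + bform B' x y.
Proof. by rewrite /bform mulmxDr mulmxDl mxE. Qed.

Lemma bform_sub a b (B B' : 'M[R]_(a, b)) x y :
  bform (B - B') x y = bform B x y - bform B' x y.
Proof. by rewrite /bform mulmxBr mulmxBl !mxE. Qed.

Lemma bform_opp a b (B : 'M[R]_(a, b)) x y : bform (- B) x y = - bform B x y.
Proof. by rewrite /bform mulmxN mulNmx mxE. Qed.

Lemma bform_scalar m c (x y : 'cV[R]_m) : bform c%:M x y = c * dot x y.
Proof. by rewrite /dot /bform mul_mx_scalar -scalemxAl mxE mulmx1. Qed.

Lemma bform_tr a b (B : 'M[R]_(a, b)) x y : bform B x y = bform B^T y x.
Proof.
have -> : bform B x y = (x^T *m B *m y)^T 0 0 by rewrite mxE.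
by rewrite !trmx_mul trmxK mulmxA.
Qed.

Lemma bform_conj a b (B : 'M[R]_(a, b)) (M : 'M[R]_b) x y :
  bform (B *m M *m B^T) x y = bform M (B^T *m x) (B^T *m y).
Proof. by rewrite /bform trmx_mul trmxK !mulmxA. Qed.

Lemma bform_dot a b (B : 'M[R]_(a, b)) x y : bform B x y = dot x (B *m y).
Proof. by rewrite /dot /bform mulmx1 mulmxA. Qed.

Lemma bform_inj a b (B B' : 'M[R]_(a, b)) :
  (forall x y, bform B x y = bform B' x y) -> B = B'.
Proof.
move=> eqB; apply/matrixP => i j; have := eqB (delta_mx i 0) (delta_mx j 0).
by rewrite /bform !trmx_delta -!rowE -!colE !mxE.
Qed.

Lemma dotC m (x y : 'cV[R]_m) : dot x y = dot y x.
Proof. by rewrite /dot bform_tr trmx1. Qed.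

Lemma dot_trmx a b (B : 'M[R]_(a, b)) x y : dot (B *m x) y = dot x (B^T *m y).
Proof. by rewrite dotC -bform_dot bform_tr bform_dot. Qed.

Lemma dot_sqr m (x : 'cV[R]_m) : dot x x = \sum_i x i 0 ^+ 2.
Proof. by rewrite /dot /bform mulmx1 mxE; apply: eq_bigr => i _; rewrite mxE expr2. Qed.

Lemma dot_ge0 m (x : 'cV[R]_m) : 0 <= dot x x.
Proof. by rewrite dot_sqr; apply: sumr_ge0 => i _; apply: sqr_ge0. Qed.

Lemma dot_eq0 m (x : 'cV[R]_m) : (dot x x == 0) = (x == 0).
Proof.
apply/eqP/eqP => [|->]; last by rewrite /dot bform0l.
rewrite dot_sqr => /eqP; rewrite psumr_eq0 => [/allP x0|i _]; last exact: sqr_ge0.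
apply/matrixP => i j; rewrite (ord1 j) mxE.
by have /= := x0 i (mem_index_enum i); rewrite sqrf_eq0 => /eqP.
Qed.

Lemma nonneg_quadratic_discr (a b c : R) : 0 <= a ->
  (forall s, 0 <= a * s ^+ 2 + 2 * b * s + c) -> b ^+ 2 <= a * c.
Proof.
move=> a_ge0 q_ge0; have [a_gt0|a_le0] := ltP 0 a.
  have [t bE] : exists t, b = a * t by exists (b / a); rewrite mulrCA divff ?mulr1 ?gt_eqF.
  by have := mulr_ge0 a_ge0 (q_ge0 (- t)); rewrite bE; nra.
have a0 : a = 0 by apply/eqP; rewrite eq_le a_le0.
subst a; rewrite mul0r.
have [->|b_neq0] := eqVneq b 0; first by rewrite expr0n.
have := q_ge0 (- (c + 1) / (2 * b)).
by rewrite mul0r add0r [2 * b * _]mulrC divfK ?mulf_neq0 ?pnatr_eq0 //; lra.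
Qed.

Definition psd_form m (B : 'M[R]_m) := forall x, 0 <= bform B x x.

Lemma bform_Cauchy_Schwarz m (B : 'M[R]_m) x y : B^T = B -> psd_form B ->
  bform B x y ^+ 2 <= bform B x x * bform B y y.
Proof.
move=> BT B_ge0; rewrite mulrC; apply: nonneg_quadratic_discr => // s.
have := B_ge0 (x + s *: y).
by rewrite bformDl !bformDr !bformZl !bformZr [bform B y x]bform_tr BT; lra.
Qed.

Definition form_ge m (B : 'M[R]_m) c := forall x, c * dot x x <= bform B x x.

Lemma form_ge_psd m (B : 'M[R]_m) c : 0 <= c -> form_ge B c -> psd_form B.
Proof. by move=> c_ge0 Bc x; apply: le_trans (Bc x); rewrite mulr_ge0 ?dot_ge0. Qed.

End BilinearForms.

Section OperatorNorm.
Variable R : realType.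

Lemma vnormE m (x : 'cV[R]_m) : vnorm x = Num.sqrt (dot x x).
Proof. by rewrite dot_sqr. Qed.

Lemma vnorm_ge0 m (x : 'cV[R]_m) : 0 <= vnorm x.
Proof. exact: sqrtr_ge0. Qed.

Lemma vnorm_sqr m (x : 'cV[R]_m) : vnorm x ^+ 2 = dot x x.
Proof. by rewrite vnormE sqr_sqrtr ?dot_ge0. Qed.

Lemma vnorm_eq0 m (x : 'cV[R]_m) : (vnorm x == 0) = (x == 0).
Proof. by rewrite vnormE sqrtr_eq0 le_eqVlt ltNge dot_ge0 orbF dot_eq0. Qed.

Lemma vnorm_gt0 m (x : 'cV[R]_m) : (0 < vnorm x) = (x != 0).
Proof. by rewrite lt_def vnorm_ge0 andbT vnorm_eq0. Qed.

Lemma vnorm0 m : vnorm (0 : 'cV[R]_m) = 0.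
Proof. by apply/eqP; rewrite vnorm_eq0. Qed.

Lemma vnormZ m c (x : 'cV[R]_m) : vnorm (c *: x) = `|c| * vnorm x.
Proof. by rewrite !vnormE /dot bformZl bformZr mulrA -expr2 sqrtrM ?sqr_ge0 // sqrtr_sqr. Qed.

Lemma vnorm_le_scaled m u (x y : 'cV[R]_m) :
  0 <= u -> dot y y <= u ^+ 2 * dot x x -> vnorm y <= u * vnorm x.
Proof.
move=> u_ge0 yx; rewrite !vnormE -(ger0_norm u_ge0) -sqrtr_sqr -sqrtrM ?sqr_ge0 //.
by rewrite ler_sqrt // mulr_ge0 ?sqr_ge0 ?dot_ge0.
Qed.

Lemma vnorm_normalize m (x : 'cV[R]_m) : x != 0 -> vnorm ((vnorm x)^-1 *: x) = 1.
Proof. by rewrite -vnorm_gt0 => x_gt0; rewrite vnormZ gtr0_norm ?invr_gt0 // mulVf ?gt_eqF. Qed.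

Lemma dot_le_vnorm m (x y : 'cV[R]_m) : dot x y <= vnorm x * vnorm y.
Proof.
have := bform_Cauchy_Schwarz x y (trmx1 _ _) (@dot_ge0 _ m).
rewrite -/(dot x y) -/(dot x x) -/(dot y y) -!vnorm_sqr.
by have := mulr_ge0 (vnorm_ge0 x) (vnorm_ge0 y); nra.
Qed.

Lemma mulmx_vnorm_bound a b (M : 'M[R]_(a, b)) :
  exists c, forall x, vnorm (M *m x) <= c * vnorm x.
Proof.
exists (Num.sqrt (\sum_i dot (row i M)^T (row i M)^T)) => x.
rewrite -ler_sqr ?nnegrE ?mulr_ge0 ?vnorm_ge0 ?sqrtr_ge0 //.
rewrite exprMn !vnorm_sqr sqr_sqrtr ?sumr_ge0 // => [|i _]; last exact: dot_ge0.
rewrite dot_sqr mulr_suml; apply: ler_sum => i _.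
have -> : (M *m x) i 0 = dot (row i M)^T x by rewrite /dot /bform trmxK mulmx1 -row_mul !mxE.
exact: bform_Cauchy_Schwarz (trmx1 _ _) (@dot_ge0 _ b).
Qed.

Lemma opnorm_has_sup a b (M : 'M[R]_(a, b)) :
  has_sup [set vnorm (M *m x) | x in [set x : 'cV[R]_b | vnorm x <= 1]]%classic.
Proof.
split; first by exists 0, 0; rewrite /= ?mulmx0 vnorm0.
have [c Mc] := mulmx_vnorm_bound M; exists `|c| => _ [x /= x_le1 <-].
apply: le_trans (Mc x) _; apply: le_trans (ler_norm _) _.
by rewrite normrM -[leRHS]mulr1 ler_wpM2l // ger0_norm ?vnorm_ge0.
Qed.

Lemma opnorm_ge0 a b (M : 'M[R]_(a, b)) : 0 <= opnorm M.
Proof. by apply: sup_upper_bound (opnorm_has_sup M) _ _; exists 0; rewrite /= ?mulmx0 vnorm0. Qed.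

Lemma vnorm_mulmx_le a b (M : 'M[R]_(a, b)) x : vnorm (M *m x) <= opnorm M * vnorm x.
Proof.
have [->|x_neq0] := eqVneq x 0; first by rewrite mulmx0 !vnorm0 mulr0.
have x_gt0 : 0 < vnorm x by rewrite vnorm_gt0.
have : vnorm (M *m ((vnorm x)^-1 *: x)) <= opnorm M.
  by apply: sup_upper_bound (opnorm_has_sup M) _ _; exists ((vnorm x)^-1 *: x);
    rewrite //= vnorm_normalize.
by rewrite -scalemxAr vnormZ ger0_norm ?invr_ge0 ?vnorm_ge0 // mulrC ler_pdivrMr.
Qed.

Lemma opnorm_le a b (M : 'M[R]_(a, b)) c :
  0 <= c -> (forall x, vnorm (M *m x) <= c * vnorm x) -> opnorm M <= c.
Proof.
move=> c_ge0 Mc; apply: ge_sup; first by exists 0, 0; rewrite /= ?mulmx0 vnorm0.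
by move=> _ [x /= x_le1 <-]; apply: le_trans (Mc x) _; rewrite -[leRHS]mulr1 ler_wpM2l.
Qed.

Lemma opnormM a b c (M : 'M[R]_(a, b)) (N : 'M[R]_(b, c)) :
  opnorm (M *m N) <= opnorm M * opnorm N.
Proof.
apply: opnorm_le; first by rewrite mulr_ge0 ?opnorm_ge0.
move=> x; rewrite -mulmxA -mulrA; apply: le_trans (vnorm_mulmx_le M _) _.
by rewrite ler_wpM2l ?opnorm_ge0 ?vnorm_mulmx_le.
Qed.

Lemma opnormM_le a b c (M : 'M[R]_(a, b)) (N : 'M[R]_(b, c)) u v :
  opnorm M <= u -> opnorm N <= v -> opnorm (M *m N) <= u * v.
Proof. by move=> Mu Nv; apply: le_trans (opnormM M N) _; rewrite ler_pM ?opnorm_ge0. Qed.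

Lemma opnorm0 a b : opnorm (0 : 'M[R]_(a, b)) = 0.
Proof.
by apply/le_anti; rewrite opnorm_ge0 andbT opnorm_le // => x; rewrite mul0mx vnorm0 mul0r.
Qed.

Lemma opnorm_dim0 a b (M : 'M[R]_(a, b)) : a = 0%N -> opnorm M = 0.
Proof. by move=> a0; subst a; rewrite [M]flatmx0 opnorm0. Qed.

Lemma opnorm_trmx_le a b (M : 'M[R]_(a, b)) : opnorm M^T <= opnorm M.
Proof.
apply: opnorm_le (opnorm_ge0 M) _ => y; set z := M^T *m y.
have : vnorm z ^+ 2 <= vnorm y * (opnorm M * vnorm z).
  rewrite vnorm_sqr {1}/z dot_trmx trmxK.
  by apply: le_trans (dot_le_vnorm _ _) _; rewrite ler_wpM2l ?vnorm_ge0 ?vnorm_mulmx_le.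
by have := mulr_ge0 (opnorm_ge0 M) (vnorm_ge0 y); have := vnorm_ge0 z; nra.
Qed.

Lemma opnorm_trmx a b (M : 'M[R]_(a, b)) : opnorm M^T = opnorm M.
Proof.
by apply/le_anti/andP; split; last rewrite -{1}[M]trmxK; exact: opnorm_trmx_le.
Qed.

Lemma bform_le_opnorm m (M : 'M[R]_m) x : bform M x x <= opnorm M * vnorm x ^+ 2.
Proof.
rewrite bform_dot; apply: le_trans (dot_le_vnorm _ _) _.
by rewrite mulrC expr2 mulrA ler_wpM2r ?vnorm_ge0 ?vnorm_mulmx_le.
Qed.

Lemma exists_unit_vector m : (0 < m)%N -> exists e : 'cV[R]_m, vnorm e = 1.
Proof.
move=> m_gt0; exists (delta_mx (Ordinal m_gt0) 0).
rewrite vnormE dot_sqr (bigD1 (Ordinal m_gt0)) //= big1 => [|i /negbTE i_neq].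
  by rewrite mxE !eqxx expr1n addr0 sqrtr1.
by rewrite mxE i_neq expr0n.
Qed.

End OperatorNorm.

Lemma unitmx_psd_coercive (R : realType) m (N : 'M[R]_m) :
  N^T = N -> psd_form N -> N \in unitmx ->
  exists2 d, 0 < d & forall x, vnorm x = 1 -> d <= bform N x x.
Proof.
move=> NT N_ge0 N_unit; set c := opnorm (invmx N); set o := opnorm N.
have c_ge0 : 0 <= c := opnorm_ge0 _; have o_ge0 : 0 <= o := opnorm_ge0 _.
have co_gt0 : 0 < c ^+ 2 * o + 1 by have := mulr_ge0 (sqr_ge0 c) o_ge0; lra.
exists (c ^+ 2 * o + 1)^-1; first by rewrite invr_gt0.
move=> x x1; set z := vnorm (N *m x); set q := bform N x x.
have cz_ge1 : 1 <= c * z by rewrite -x1 -{1}(mulKmx N_unit x) vnorm_mulmx_le.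
have zE : z ^+ 2 = bform N x (N *m x) by rewrite vnorm_sqr dot_trmx NT -bform_dot.
have CS := bform_Cauchy_Schwarz x (N *m x) NT N_ge0; rewrite -zE in CS.
have Nz := bform_le_opnorm N (N *m x); rewrite -/o -/z in Nz.
have q_ge0 : 0 <= q := N_ge0 x.
(* Cauchy-Schwarz for the form of N: |Nx|^4 = (x^T N (N x))^2 <= (x^T N x) |N| |Nx|^2. *)
have z2_le : z ^+ 2 <= o * q.
  have z_gt0 : 0 < z by nra.
  have := ler_wpM2l q_ge0 Nz => qNz.
  rewrite -/q in CS; rewrite -(ler_pM2r (exprn_gt0 2 z_gt0)) -expr2; lra.
rewrite -(ler_pM2r co_gt0) mulVf ?gt_eqF //.
by have := ler_wpM2l (sqr_ge0 c) z2_le; nra.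
Qed.

Lemma form_ge_unitmx (R : realType) m (M : 'M[R]_m) c :
  0 < c -> form_ge M c -> M \in unitmx.
Proof.
move=> c_gt0 Mc; rewrite -row_free_unit -kermx_eq0.
apply/rowV0P => v /sub_kermxP vM; apply/eqP; rewrite -trmx_eq0 -dot_eq0 eq_le dot_ge0 andbT.
have := Mc v^T; rewrite /bform trmxK vM mul0mx mxE.
by have := dot_ge0 v^T; nra.
Qed.

Lemma opnorm_invmx_le (R : realType) m (M : 'M[R]_m) c :
  0 < c -> form_ge M c -> opnorm (invmx M) <= c^-1.
Proof.
move=> c_gt0 Mc; apply: opnorm_le; first by rewrite invr_ge0 ltW.
move=> y; set z := invmx M *m y.
have Mz : M *m z = y by rewrite mulmxA mulmxV ?mul1mx // (form_ge_unitmx c_gt0 Mc).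
have : c * vnorm z ^+ 2 <= vnorm z * vnorm y.
  by rewrite vnorm_sqr; apply: le_trans (Mc z) _; rewrite bform_dot Mz dot_le_vnorm.
move=> zy; rewrite -(ler_pM2l c_gt0) mulrA mulfV ?gt_eqF // mul1r.
by have := vnorm_ge0 z; have := vnorm_ge0 y; nra.
Qed.

Definition rayleigh_min (R : realType) m (P : 'M[R]_m) : R :=
  inf [set bform P x x | x in [set x : 'cV[R]_m | vnorm x = 1]]%classic.

Section SmallestEigenvalue.
Variables (R : realType) (m : nat) (P : 'M[R]_m).
Hypotheses (m_gt0 : (0 < m)%N) (PT : P^T = P) (P_ge0 : psd_form P).

Let rayleigh_set := [set bform P x x | x in [set x : 'cV[R]_m | vnorm x = 1]]%classic.

Let rayleigh_set_neq0 : (rayleigh_set !=set0)%classic.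
Proof. by have [e e1] := exists_unit_vector R m_gt0; exists (bform P e e), e. Qed.

Let rayleigh_set_lbound : has_lbound rayleigh_set.
Proof. by exists 0 => _ [x _ <-]; exact: P_ge0. Qed.

Lemma rayleigh_min_le x : vnorm x = 1 -> rayleigh_min P <= bform P x x.
Proof. by move=> x1; apply: (ge_inf rayleigh_set_lbound); exists x. Qed.

Lemma rayleigh_min_ge c : (forall x, vnorm x = 1 -> c <= bform P x x) -> c <= rayleigh_min P.
Proof. by move=> Pc; apply: (lb_le_inf rayleigh_set_neq0) => _ [x /Pc + <-]. Qed.

Lemma rayleigh_min_scaled x : rayleigh_min P * vnorm x ^+ 2 <= bform P x x.
Proof.
have [->|x_neq0] := eqVneq x 0; first by rewrite vnorm0 expr0n mulr0 bform0l.
have x_gt0 : 0 < vnorm x ^+ 2 by rewrite exprn_gt0 ?vnorm_gt0.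
have := rayleigh_min_le (vnorm_normalize x_neq0).
by rewrite bformZl bformZr mulrA -expr2 exprVn mulrC ler_pdivlMr.
Qed.

Lemma eigenvalue_rayleigh_min : eigenvalue P (rayleigh_min P).
Proof.
set m1 := rayleigh_min P; set N := P - m1%:M.
have NT : N^T = N by rewrite /N linearB /= PT tr_scalar_mx.
have NE x : bform N x x = bform P x x - m1 * vnorm x ^+ 2.
  by rewrite bform_sub bform_scalar vnorm_sqr.
have N_ge0 : psd_form N by move=> x; rewrite NE subr_ge0 rayleigh_min_scaled.
rewrite /eigenvalue /eigenspace kermx_eq0 row_free_unit -/N; apply/negP => N_unit.
have [d d_gt0 Nd] := unitmx_psd_coercive NT N_ge0 N_unit.
suff : m1 + d <= m1 by lra.
apply: rayleigh_min_ge => x x1; have := Nd x x1.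
by rewrite NE x1 expr1n mulr1; lra.
Qed.

Lemma rayleigh_min_le_eigenvalue a : eigenvalue P a -> rayleigh_min P <= a.
Proof.
case/eigenvalueP => v vP v_neq0; set x := v^T.
have Px : P *m x = a *: x by rewrite /x -{1}PT -trmx_mul vP linearZ.
have x_gt0 : 0 < vnorm x ^+ 2 by rewrite exprn_gt0 ?vnorm_gt0 ?trmx_eq0.
have := rayleigh_min_scaled x.
by rewrite bform_dot Px /dot bformZr -/(dot x x) -vnorm_sqr ler_pM2r.
Qed.

Lemma lambda_minE : lambda_min P = rayleigh_min P.
Proof.
have eig_lbound : has_lbound [set a | eigenvalue P a]%classic.
  by exists (rayleigh_min P) => a /rayleigh_min_le_eigenvalue.
apply/le_anti/andP; split; first exact: (ge_inf eig_lbound) eigenvalue_rayleigh_min.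
by apply: lb_le_inf => [|a /rayleigh_min_le_eigenvalue //]; exists (rayleigh_min P);
  exact: eigenvalue_rayleigh_min.
Qed.

Lemma lambda_min_ge c : form_ge P c -> c <= lambda_min P.
Proof.
move=> Pc; rewrite lambda_minE; apply: rayleigh_min_ge => x x1.
by have := Pc x; rewrite -vnorm_sqr x1 expr1n mulr1.
Qed.

Lemma lambda_min_le x : vnorm x = 1 -> lambda_min P <= bform P x x.
Proof. by move=> x1; rewrite lambda_minE; apply: rayleigh_min_le. Qed.

Lemma lambda_min_form_ge : form_ge P (lambda_min P).
Proof. by move=> x; rewrite lambda_minE -vnorm_sqr rayleigh_min_scaled. Qed.

Lemma lambda_min_le_opnorm Q : (forall x, bform P x x <= bform Q x x) -> lambda_min P <= opnorm Q.
Proof.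
move=> PQ; have [e e1] := exists_unit_vector R m_gt0.
apply: le_trans (lambda_min_le e1) _; apply: le_trans (PQ e) _.
by have := bform_le_opnorm Q e; rewrite e1 expr1n mulr1.
Qed.

End SmallestEigenvalue.

Lemma lambda_min0 (R : realType) (M : 'M[R]_0) : lambda_min M = 0.
Proof.
rewrite /lambda_min [X in inf X](_ : _ = set0) ?inf0 //.
by apply/seteqP; split => a //=; rewrite /eigenvalue [eigenspace M a]flatmx0 eqxx.
Qed.

Lemma opnorm_invmx_le_lambda_min (R : realType) m (M P : 'M[R]_m) c :
  0 < c -> P^T = P -> form_ge P c -> (forall x, bform P x x <= bform M x x) ->
  opnorm (invmx M) <= (lambda_min P)^-1.
Proof.
(* For m = 0 both sides vanish: lambda_min P is the infimum of the empty set, i.e. 0,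
   and 0^-1 = 0. *)
case: m M P => [|m] M P c_gt0 PT Pc PM.
  by rewrite [invmx M]thinmx0 opnorm0 lambda_min0 invr0.
have P_ge0 := form_ge_psd (ltW c_gt0) Pc.
have lP_gt0 : 0 < lambda_min P := lt_le_trans c_gt0 (lambda_min_ge (ltn0Sn m) PT P_ge0 Pc).
apply: opnorm_invmx_le lP_gt0 _ => x.
exact: le_trans (lambda_min_form_ge (ltn0Sn m) PT P_ge0 x) (PM x).
Qed.

(* Identities between matrix polynomials: expand both sides completely, then compare
   the bilinear forms of the resulting monomials by linear arithmetic. *)
Ltac mx_expand :=
  rewrite ?(mulmxDl, mulmxDr, mulmxBl, mulmxBr, mulNmx, mulmxN, opprK, opprD);
  rewrite ?(raddfD, raddfB, raddfN) /= ?trmx_mul ?trmxK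
    ?(mulmxDl, mulmxDr, mulmxBl, mulmxBr, mulNmx, mulmxN, opprK, opprD) ?mulmxA.
Ltac mx_identity :=
  apply: bform_inj => ? ?; rewrite ?(bform_add, bform_sub, bform_opp); lra.

Section RiccatiAlgebra.
Variables (R : realType) (n p : nat).
Variables (A : 'M[R]_n) (C : 'M[R]_(p, n)) (W : 'M[R]_n) (V : 'M[R]_p).
Hypothesis VT : V^T = V.

Definition innov (S : 'M[R]_n) : 'M[R]_p := C *m S *m C^T + V.

Definition joseph (K : 'M[R]_(n, p)) (S : 'M[R]_n) : 'M[R]_n :=
  (A - K *m C) *m S *m (A - K *m C)^T + W + K *m V *m K^T.

Lemma bform_innov_ge S x : psd_form S -> bform V x x <= bform (innov S) x x.
Proof. by move=> S_ge0; rewrite /innov bform_add bform_conj ler_wpDl. Qed.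

Lemma form_ge_innov S c : psd_form S -> form_ge V c -> form_ge (innov S) c.
Proof. by move=> S_ge0 Vc x; apply: le_trans (Vc x) (bform_innov_ge x S_ge0). Qed.

Lemma innov_unit S c : 0 < c -> psd_form S -> form_ge V c -> innov S \in unitmx.
Proof. by move=> c_gt0 S_ge0 Vc; apply: form_ge_unitmx c_gt0 (form_ge_innov S_ge0 Vc). Qed.

Lemma innov_tr S : S^T = S -> (innov S)^T = innov S.
Proof. by move=> ST; rewrite /innov linearD /= !trmx_mul trmxK ST VT mulmxA. Qed.

Section GainIdentities.
Variable S : 'M[R]_n.
Hypotheses (ST : S^T = S) (S_unit : innov S \in unitmx).

Lemma kgain_innov : kgain A C V S *m innov S = A *m S *m C^T.
Proof. by rewrite /kgain mulmxKV. Qed.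

Lemma mulmx_CSA k (X : 'M[R]_(k, p)) :
  X *m C *m S *m A^T = X *m innov S *m (kgain A C V S)^T.
Proof.
have : (innov S)^T *m (kgain A C V S)^T = C *m S *m A^T.
  by rewrite -trmx_mul kgain_innov !trmx_mul trmxK ST mulmxA.
by rewrite innov_tr // -!mulmxA => ->.
Qed.

Lemma mulmx_CSC k (X : 'M[R]_(k, p)) : X *m C *m S *m C^T = X *m innov S - X *m V.
Proof. by rewrite /innov mulmxDr addrK !mulmxA. Qed.

Lemma riccatiE : riccati A C W V S =
  A *m S *m A^T - kgain A C V S *m innov S *m (kgain A C V S)^T + W.
Proof. by rewrite -mulmx_CSA. Qed.

Lemma joseph_riccati K : joseph K S =
  riccati A C W V S + (K - kgain A C V S) *m innov S *m (K - kgain A C V S)^T.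
Proof.
rewrite riccatiE /joseph; have := kgain_innov; have := mulmx_CSA; have := mulmx_CSC.
move: (kgain A C V S) (innov S) => K0 M hC hA hK; mx_expand.
by rewrite !hA !hC -!hK; mx_expand; mx_identity.
Qed.

Lemma joseph_kgain : joseph (kgain A C V S) S = riccati A C W V S.
Proof. by rewrite joseph_riccati subrr mul0mx mul0mx addr0. Qed.

End GainIdentities.

Lemma riccati_sub S1 S : S1^T = S1 -> S^T = S ->
  innov S1 \in unitmx -> innov S \in unitmx ->
  riccati A C W V S1 - riccati A C W V S =
  (A - kgain A C V S1 *m C) *m (S1 - S) *m (A - kgain A C V S *m C)^T.
Proof.
move=> S1T ST S1_unit S_unit; rewrite !riccatiE //.
have := kgain_innov S1_unit; have := mulmx_CSA S1T S1_unit; have := mulmx_CSC S1.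
have := kgain_innov S_unit; have := mulmx_CSA ST S_unit; have := mulmx_CSC S.
move: (kgain A C V S1) (innov S1) (kgain A C V S) (innov S) => K1 M1 K M.
move=> hC hA hK hC1 hA1 hK1; mx_expand.
by rewrite !hA !hC !hA1 !hC1 -!hK -!hK1; mx_expand; mx_identity.
Qed.

Lemma kgain_sub S1 S : innov S1 \in unitmx -> innov S \in unitmx ->
  kgain A C V S1 - kgain A C V S =
  (A - kgain A C V S *m C) *m (S1 - S) *m C^T *m invmx (innov S1).
Proof.
move=> S1_unit S_unit; apply: (canRL (mulmxK S1_unit)).
have := kgain_innov S1_unit; have := mulmx_CSC S1.
have := kgain_innov S_unit; have := mulmx_CSC S.
move: (kgain A C V S1) (innov S1) (kgain A C V S) (innov S) => K1 M1 K M.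
move=> hC hK hC1 hK1; mx_expand.
by rewrite !hC !hC1 -!hK -!hK1; mx_expand; mx_identity.
Qed.

End RiccatiAlgebra.

Section KalmanRecursion.
Variables (R : realType) (n p : nat).
Variables (A : 'M[R]_n) (C : 'M[R]_(p, n)) (W : 'M[R]_n) (V : 'M[R]_p) (a0 : R).
Hypotheses (a0_gt0 : 0 < a0) (WT : W^T = W) (VT : V^T = V).
Hypotheses (W_ge : form_ge W a0) (V_ge : form_ge V a0).

Let W_ge0 : psd_form W := form_ge_psd (ltW a0_gt0) W_ge.
Let V_ge0 : psd_form V := form_ge_psd (ltW a0_gt0) V_ge.

Lemma bform_joseph K S x : bform (joseph A C W V K S) x x =
  bform S ((A - K *m C)^T *m x) ((A - K *m C)^T *m x) + bform W x x
  + bform V (K^T *m x) (K^T *m x).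
Proof. by rewrite /joseph !bform_add !bform_conj. Qed.

Lemma joseph_tr K S : S^T = S -> (joseph A C W V K S)^T = joseph A C W V K S.
Proof.
move=> ST; rewrite /joseph; move: (A - K *m C) => F.
by rewrite !raddfD /= WT !trmx_mul !trmxK ST VT !mulmxA.
Qed.

Lemma joseph_psd K S : psd_form S -> psd_form (joseph A C W V K S).
Proof. by move=> S_ge0 x; rewrite bform_joseph !addr_ge0. Qed.

Lemma Sig_sym_psd t : (Sig A C W V t)^T = Sig A C W V t /\ psd_form (Sig A C W V t).
Proof.
elim: t => [|t [ST S_ge0]] /=; first by split=> [|x]; rewrite ?trmx0 ?bform0.
have S_unit := innov_unit C a0_gt0 S_ge0 V_ge.
by rewrite -joseph_kgain //; split; [apply: joseph_tr | apply: joseph_psd].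
Qed.

Lemma innov_Sig_unit t : innov C V (Sig A C W V t) \in unitmx.
Proof. by have [_ S_ge0] := Sig_sym_psd t; apply: innov_unit a0_gt0 S_ge0 V_ge. Qed.

Lemma riccati_le_joseph S K x : S^T = S -> psd_form S ->
  bform (riccati A C W V S) x x <= bform (joseph A C W V K S) x x.
Proof.
move=> ST S_ge0; have S_unit := innov_unit C a0_gt0 S_ge0 V_ge.
rewrite (joseph_riccati A W VT ST S_unit) bform_add bform_conj ler_wpDr //.
by apply: (form_ge_psd (ltW a0_gt0)); apply: form_ge_innov.
Qed.

Lemma lambda_min_W_le K : (0 < n)%N -> lambda_min W <= opnorm (W + K *m V *m K^T).
Proof.
move=> n_gt0; apply: (lambda_min_le_opnorm n_gt0 WT W_ge0) => x.
by rewrite bform_add bform_conj ler_wpDr.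
Qed.

Lemma Psi_step t : (1 <= t)%N ->
  Psi A C W V t.+1 1 = (A - Lt A C W V t *m C) *m Psi A C W V t 1.
Proof. by move=> t_ge1 /=; rewrite ltnNge t_ge1. Qed.

Lemma riccati0 : riccati A C W V 0 = W.
Proof. by rewrite /riccati !mulmx0 !mul0mx subrr add0r. Qed.

Lemma Psi_form_le_Sig t x : (1 <= t)%N ->
  bform W ((Psi A C W V t 1)^T *m x) ((Psi A C W V t 1)^T *m x)
    <= bform (Sig A C W V t) x x.
Proof.
elim: t x => [//|[|t] IH] x _; first by rewrite /= riccati0 trmx1 mul1mx.
have [ST S_ge0] := Sig_sym_psd t.+1; have S_unit := innov_Sig_unit t.+1.
rewrite Psi_step // trmx_mul -mulmxA [Sig _ _ _ _ t.+2]/= -joseph_kgain //.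
apply: le_trans (IH _ isT) _.
by rewrite bform_joseph -addrA ler_wpDr // addr_ge0.
Qed.

Section Stationary.
Variable Sg : 'M[R]_n.
Hypotheses (SgT : Sg^T = Sg) (Sg_ge0 : psd_form Sg) (Sg_fix : Sg = riccati A C W V Sg).

Let L := kgain A C V Sg.
Let F := A - L *m C.
Let Sg_unit : innov C V Sg \in unitmx := innov_unit C a0_gt0 Sg_ge0 V_ge.

Lemma Sg_joseph : Sg = joseph A C W V L Sg.
Proof. by rewrite (joseph_kgain A W VT SgT Sg_unit). Qed.

Lemma Sig_le_Sg t x : bform (Sig A C W V t) x x <= bform Sg x x.
Proof.
elim: t x => [|t IH] x /=; first by rewrite bform0 Sg_ge0.
have [ST S_ge0] := Sig_sym_psd t.
apply: le_trans (riccati_le_joseph L x ST S_ge0) _.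
by rewrite [in leRHS]Sg_joseph !bform_joseph !lerD2r IH.
Qed.

Lemma form_ge_Sg : form_ge Sg a0.
Proof.
move=> x; apply: le_trans (W_ge x) _; rewrite [in leRHS]Sg_joseph bform_joseph.
by have := Sg_ge0 (F^T *m x); have := V_ge0 (L^T *m x); lra.
Qed.

Lemma Sig_sub t : (1 <= t)%N ->
  Sig A C W V t - Sg = Psi A C W V t 1 *m (W - Sg) *m (iter t.-1 (mulmx F) 1%:M)^T.
Proof.
elim: t => [//|[|t] IH] _; first by rewrite /= riccati0 trmx1 mul1mx mulmx1.
have [ST _] := Sig_sym_psd t.+1.
have -> : Sig A C W V t.+2 = riccati A C W V (Sig A C W V t.+1) by [].
rewrite Psi_step // [in LHS]Sg_fix.
rewrite (riccati_sub A W VT ST SgT (innov_Sig_unit t.+1) Sg_unit) IH //.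
by rewrite iterS trmx_mul !mulmxA.
Qed.

Lemma Lt_sub t :
  Lt A C W V t - L = F *m (Sig A C W V t - Sg) *m C^T *m invmx (innov C V (Sig A C W V t)).
Proof. exact: kgain_sub (innov_Sig_unit t) Sg_unit. Qed.

Variables (sb g : R).
Hypotheses (sb_gt0 : 0 < sb) (Sg_le : opnorm Sg <= sb).
Hypotheses (g_ge0 : 0 <= g) (g_sqr : 1 - a0 / sb <= g ^+ 2).

Let kappa := Num.sqrt (sb / a0).

Lemma bform_Sg_le x : bform Sg x x <= sb * dot x x.
Proof.
apply: le_trans (bform_le_opnorm Sg x) _.
by rewrite vnorm_sqr ler_wpM2r ?dot_ge0.
Qed.

Lemma a0_le_sb : (0 < n)%N -> a0 <= sb.
Proof.
move=> n_gt0; have [e e1] := exists_unit_vector R n_gt0.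
have := le_trans (form_ge_Sg e) (bform_Sg_le e).
by rewrite -vnorm_sqr e1 expr1n !mulr1.
Qed.

(* Sg - F Sg F^T = W + L V L^T >= a0 I >= (a0 / sb) Sg. *)
Lemma F_contract x : bform Sg (F^T *m x) (F^T *m x) <= g ^+ 2 * bform Sg x x.
Proof.
have Sg_le_x := bform_Sg_le x; have Sgx_ge0 := Sg_ge0 x.
have : bform Sg (F^T *m x) (F^T *m x) + a0 * dot x x <= bform Sg x x.
  rewrite [in leRHS]Sg_joseph bform_joseph.
  by have := W_ge x; have := V_ge0 (L^T *m x); lra.
have : a0 / sb * bform Sg x x <= a0 * dot x x.
  apply: le_trans (ler_wpM2l _ Sg_le_x) _; first by rewrite divr_ge0 ?ltW.
  by rewrite mulrA divfK ?gt_eqF.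
have := ler_wpM2r Sgx_ge0 g_sqr; lra.
Qed.

Lemma iterF_contract k x :
  bform Sg ((iter k (mulmx F) 1%:M)^T *m x) ((iter k (mulmx F) 1%:M)^T *m x)
    <= (g ^+ k) ^+ 2 * bform Sg x x.
Proof.
elim: k x => [|k IH] x; first by rewrite trmx1 mul1mx expr1n mul1r.
rewrite iterS trmx_mul -mulmxA; apply: le_trans (IH _) _.
rewrite [g ^+ k.+1]exprSr exprMn -[in X in _ <= X]mulrA.
by apply: ler_wpM2l; [exact: sqr_ge0 | exact: F_contract].
Qed.

Lemma vnorm_le_kappa (B : 'M[R]_n) c x y : form_ge B a0 -> 0 <= c ->
  bform B y y <= c ^+ 2 * bform Sg x x -> vnorm y <= kappa * c * vnorm x.
Proof.
move=> B_ge c_ge0 Byx; apply: vnorm_le_scaled; first by rewrite mulr_ge0 ?sqrtr_ge0.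
rewrite exprMn /kappa sqr_sqrtr ?divr_ge0 ?(ltW sb_gt0) ?(ltW a0_gt0) // -(ler_pM2l a0_gt0).
have -> : a0 * (sb / a0 * c ^+ 2 * dot x x) = c ^+ 2 * (sb * dot x x).
  by field; rewrite gt_eqF.
apply: le_trans (B_ge y) _; apply: le_trans Byx _.
by rewrite ler_wpM2l ?sqr_ge0 ?bform_Sg_le.
Qed.

Lemma opnorm_iterF k : opnorm (iter k (mulmx F) 1%:M) <= kappa * g ^+ k.
Proof.
rewrite -opnorm_trmx; apply: opnorm_le; first by rewrite mulr_ge0 ?sqrtr_ge0 ?exprn_ge0.
by move=> x; apply: vnorm_le_kappa form_ge_Sg (exprn_ge0 _ g_ge0) (iterF_contract k x).
Qed.

Lemma opnorm_Psi t : (1 <= t)%N -> opnorm (Psi A C W V t 1) <= kappa.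
Proof.
move=> t_ge1; rewrite -opnorm_trmx; apply: opnorm_le (sqrtr_ge0 _) _ => x.
rewrite -[X in _ <= X * _]mulr1; apply: vnorm_le_kappa W_ge ler01 _.
by rewrite expr1n mul1r; apply: le_trans (Psi_form_le_Sig x t_ge1) (Sig_le_Sg t x).
Qed.

Lemma opnorm_Sig_sub t : (1 <= t)%N ->
  opnorm (Sig A C W V t - Sg) <= kappa ^+ 2 * g ^+ t.-1 * opnorm (W - Sg).
Proof.
move=> t_ge1; rewrite Sig_sub //.
have -> : kappa ^+ 2 * g ^+ t.-1 * opnorm (W - Sg) =
  kappa * opnorm (W - Sg) * (kappa * g ^+ t.-1) by ring.
by rewrite !opnormM_le ?opnorm_trmx ?opnorm_Psi ?opnorm_iterF.
Qed.

Lemma opnorm_Lt_sub t (lv : R) : (1 <= t)%N ->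
  opnorm (invmx (innov C V (Sig A C W V t))) <= lv ->
  opnorm (Lt A C W V t - L) <= kappa ^+ 3 * g ^+ t * opnorm (W - Sg) * opnorm C * lv.
Proof.
move=> t_ge1 inv_le; rewrite Lt_sub.
have -> : kappa ^+ 3 * g ^+ t * opnorm (W - Sg) * opnorm C * lv =
  kappa * g * (kappa ^+ 2 * g ^+ t.-1 * opnorm (W - Sg)) * opnorm C * lv.
  by case: t t_ge1 {inv_le} => // t _; rewrite [g ^+ t.+1]exprS /=; ring.
have F_le : opnorm F <= kappa * g by have := opnorm_iterF 1; rewrite /= mulmx1 expr1.
by rewrite !opnormM_le ?opnorm_trmx ?opnorm_Sig_sub.
Qed.

Lemma kalman_bounds t : (1 <= t)%N ->
  [/\ opnorm (Psi A C W V t 1) <= kappa,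
      opnorm (Sig A C W V t - Sg) <= kappa ^+ 2 * g ^+ t.-1 * opnorm (W - Sg)
    & opnorm (Lt A C W V t - L) <=
        kappa ^+ 3 * g ^+ t * opnorm (W - Sg) * opnorm C / lambda_min V].
Proof.
move=> t_ge1; split; [exact: opnorm_Psi | exact: opnorm_Sig_sub |].
apply: opnorm_Lt_sub t_ge1 _; have [_ S_ge0] := Sig_sym_psd t.
exact: opnorm_invmx_le_lambda_min a0_gt0 VT V_ge (fun x => bform_innov_ge C V x S_ge0).
Qed.

End Stationary.

End KalmanRecursion.

Lemma loewner_le_scalar (R : realType) m (a : R) (B : 'M[R]_m) :
  loewner_le a%:M B -> B^T = B /\ form_ge B a.
Proof.
case=> /eqP; rewrite raddfB /= tr_scalar_mx subr_eq addrNK => /eqP BT Ba.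
by split=> // x; have := Ba x; rewrite -/(bform _ x x) bform_sub bform_scalar subr_ge0.
Qed.

Lemma le_sqrt_ratio (R : realType) (k q d : R) : 0 <= k -> 0 < d -> d <= q ->
  k <= Num.sqrt (q * k ^+ 2 / d).
Proof.
move=> k_ge0 d_gt0 d_le_q; rewrite -{1}(ger0_norm k_ge0) -sqrtr_sqr ler_sqrt.
  by rewrite ler_pdivlMr //; have := sqr_ge0 k; nra.
by rewrite divr_ge0 ?mulr_ge0 ?sqr_ge0 // ?(le_trans (ltW d_gt0) d_le_q) ?ltW.
Qed.

Lemma gammaF_bounds (R : realType) (a s : R) : 0 < a -> a <= s ->
  let g := 1 - a / (2 * s) in [/\ 0 <= g, 1 - a / s <= g ^+ 2 & g ^+ 2 < 1].
Proof.
move=> a_gt0 a_le_s g; have s_gt0 : 0 < s := lt_le_trans a_gt0 a_le_s.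
have u_gt0 : 0 < a / s by rewrite divr_gt0.
have u_le1 : a / s <= 1 by rewrite ler_pdivrMr // mul1r.
have -> : g = 1 - a / s / 2 by rewrite /g invfM mulrA mulrAC.
by split; nra.
Qed.

Theorem lemmaE5 (R : realType) (n p : nat)
  (A : 'M[R]_n) (C : 'M[R]_(p, n)) (W : 'M[R]_n) (V : 'M[R]_p)
  (Wh : 'M[R]_n) (Sigma : 'M[R]_n)
  (alpha0 alpha1 psi sigbar : R) :
  0 < alpha0 -> 0 < alpha1 -> 0 < psi -> 0 < sigbar ->
  psd Wh -> Wh *m Wh = W ->
  stabilizable A Wh -> detectable A C ->
  loewner_le (alpha0%:M) W -> loewner_le W (alpha1%:M) ->
  loewner_le (alpha0%:M) V -> loewner_le V (alpha1%:M) ->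
  opnorm C <= psi ->
  psd Sigma -> Sigma = riccati A C W V Sigma ->
  opnorm Sigma <= sigbar ->
  let L := kgain A C V Sigma in
  let kappaF := Num.sqrt (sigbar / alpha0) in
  let gammaF := 1 - alpha0 / (2 * sigbar) in
  let rho := Num.sqrt (opnorm (W + L *m V *m L^T) / (lambda_min W * (1 - gammaF ^+ 2))) in
  forall t : nat, (1 <= t)%N ->
    [/\ opnorm (Psi A C W V t 1) <=
          Num.sqrt (opnorm (W + L *m V *m L^T) * kappaF ^+ 2
                    / (lambda_min W * (1 - gammaF ^+ 2))),
        opnorm (Sig A C W V t - Sigma) <=
          kappaF ^+ 2 * gammaF ^+ t.-1 * opnorm (W - Sigma) * rho
      & opnorm (Lt A C W V t - L) <=
          kappaF ^+ 3 * gammaF ^+ t * opnorm (W - Sigma) * opnorm C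
            / lambda_min V * rho].
Proof.
move=> a0_gt0 _ _ sb_gt0 _ _ _ _ /loewner_le_scalar[WT W_ge] _
  /loewner_le_scalar[VT V_ge] _ _ [SgT Sg_ge0] Sg_fix Sg_le L kappaF gammaF rho t t_ge1.
have [n0|n_gt0] := posnP n.
  by rewrite !(opnorm_dim0 _ n0) sqrtr_ge0 !mulr0 !mul0r.
have a0_sb := a0_le_sb a0_gt0 VT W_ge V_ge SgT Sg_ge0 Sg_fix Sg_le n_gt0.
have [g_ge0 g_sqr g_lt1] := gammaF_bounds a0_gt0 a0_sb.
rewrite -/gammaF in g_ge0 g_sqr g_lt1.
have [kF kS kL] := kalman_bounds a0_gt0 WT VT W_ge V_ge SgT Sg_ge0 Sg_fix sb_gt0 Sg_le
  g_ge0 g_sqr t_ge1.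
have lW_ge : alpha0 <= lambda_min W.
  exact: (lambda_min_ge n_gt0 WT (form_ge_psd (ltW a0_gt0) W_ge) W_ge).
have d_gt0 : 0 < lambda_min W * (1 - gammaF ^+ 2) by rewrite mulr_gt0 ?subr_gt0; lra.
have d_le : lambda_min W * (1 - gammaF ^+ 2) <= opnorm (W + L *m V *m L^T).
  apply: le_trans (lambda_min_W_le a0_gt0 WT W_ge V_ge L n_gt0).
  by rewrite ler_piMr ?gerBl ?sqr_ge0; lra.
have rho_ge1 : 1 <= rho by have := le_sqrt_ratio ler01 d_gt0 d_le; rewrite expr1n mulr1.
split.
- exact: le_trans kF (le_sqrt_ratio (sqrtr_ge0 _) d_gt0 d_le).
- exact: le_trans kS (ler_peMr (le_trans (opnorm_ge0 _) kS) rho_ge1).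
- exact: le_trans kL (ler_peMr (le_trans (opnorm_ge0 _) kL) rho_ge1).
Qed.
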